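(* Let $F:\mathbb{R}^n\to\mathbb{R}$ be $C^2$, let $\mathbf{e}_i$ be one of the standard coordinate unit vectors, and let $L$ be a line parallel to $\mathbf{e}_i$. Suppose $\mathbf{x}^*\in L$ is a local maximum of $F$ in the $\mathbf{e}_i$ direction (i.e. there is $\varepsilon_1>0$ with $F(\mathbf{x}^*+c\,\mathbf{e}_i)<F(\mathbf{x}^* )$ for all $0<|c|<\varepsilon_1$) and that $\frac{\partial^2 F}{\partial \mathbf{e}_i^2}(\mathbf{x}^* )<0$. Then there exists $\epsilon>0$ such that for every orthogonal grid of spacing $dx<\epsilon$ having $L$ as one of its grid lines, there is a grid ridge point $\mathbf{x}^g$ of $F$ with $\|\mathbf{x}^*-\mathbf{x}^g\|\le dx$.
   Context: An orthogonal grid of spacing $dx$ in $\mathbb{R}^n$ is a set of points $\mathbf{p}+dx\,\mathbb{Z}^n$ with coordinate directions $\mathbf{e}_1,\dots,\mathbf{e}_n$; its grid lines are the lines through grid points parallel to some $\mathbf{e}_k$. A grid point $\mathbf{x}_0$ is a grid ridge point of $F$ if $F(\mathbf{x}_0)\ge F(\mathbf{x}_0\pm dx\,\mathbf{e}_k)$ (both signs) for at least one $k\in\{1,\dots,n\}$. *)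

From HB Require Import structures.
From mathcomp Require Import all_boot all_order all_algebra.
From mathcomp Require Import all_classical all_reals all_analysis.
Set Implicit Arguments. Unset Strict Implicit. Unset Printing Implicit Defensive.
Import Order.TTheory GRing.Theory Num.Theory.
Import numFieldNormedType.Exports.
Local Open Scope ring_scope.

Definition coord_vec (R : realType) (n : nat) (k : 'I_n) : 'rV[R]_n :=
  \row_(j < n) (k == j)%:R.

Definition enorm (R : realType) (n : nat) (x : 'rV[R]_n) : R :=
  Num.sqrt (\sum_(j < n) x ord0 j ^+ 2).

Definition C2 (R : realType) (n : nat) (F : 'rV[R]_n -> R) : Prop :=
  (forall (j : 'I_n) (x : 'rV[R]_n), derivable F x (coord_vec R j)) /\
  (forall (j k : 'I_n) (x : 'rV[R]_n),
      derivable ('D_(coord_vec R j) F) x (coord_vec R k)) /\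
  (forall (j k : 'I_n),
      continuous ('D_(coord_vec R k) ('D_(coord_vec R j) F))).

Definition on_grid (R : realType) (n : nat) (dx : R) (p x : 'rV[R]_n) : Prop :=
  forall k : 'I_n, exists z : int, x ord0 k = p ord0 k + z%:~R * dx.

Definition on_line (R : realType) (n : nat) (q : 'rV[R]_n) (i : 'I_n)
  (y : 'rV[R]_n) : Prop :=
  exists t : R, y = q + t *: coord_vec R i.

Definition is_grid_line (R : realType) (n : nat) (dx : R) (p : 'rV[R]_n)
  (q : 'rV[R]_n) (i : 'I_n) : Prop :=
  exists (g : 'rV[R]_n) (k : 'I_n), on_grid dx p g /\
    (forall y, on_line q i y <-> on_line g k y).

Definition grid_ridge (R : realType) (n : nat) (F : 'rV[R]_n -> R) (dx : R)
  (x0 : 'rV[R]_n) : Prop :=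
  exists k : 'I_n,
    F (x0 + dx *: coord_vec R k) <= F x0 /\ F (x0 - dx *: coord_vec R k) <= F x0.

From HB Require Import structures.
From mathcomp Require Import all_boot all_order all_algebra.
From mathcomp Require Import all_classical all_reals all_analysis.
From mathcomp Require Import lra.
Set Implicit Arguments. Unset Strict Implicit. Unset Printing Implicit Defensive.
Import Order.TTheory GRing.Theory Num.Theory.
Import numFieldNormedType.Exports.
Local Open Scope ring_scope.

(** Along the line [c |-> x* + c e_i] the function [g c := F (x* + c e_i)]
   has [g'(0) = 0] and [g'' < 0] near [0], so [g] increases up to [0] and
   decreases after it on some [[-r, r]]. The grid points of the line form
   the progression [c0 + dx Z] with [-dx < c0 <= 0]; of [c0] and [c0 + dx]
   the one with the larger value of [g] dominates both its grid neighbours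
   as soon as [2 dx < r], and it lies within [dx] of [x*]. *)

Section restriction_to_a_line.
Variables (R : realType) (V : normedModType R).

Lemma line_difference_quotient (f : V -> R) (x v : V) (c : R) :
  (fun h : R => h^-1 *: (((fun t => f (x + t *: v)) \o shift c) (h *: 1)
                         - f (x + c *: v)))
  = (fun h : R => h^-1 *: ((f \o shift (x + c *: v)) (h *: v) - f (x + c *: v))).
Proof.
apply: funext => h /=; congr (_ *: (_ - _)); congr f.
by rewrite [h *: 1]mulr1 scalerDl addrCA addrA.
Qed.

Lemma derivable_line (f : V -> R) (x v : V) (c : R) :
  derivable f (x + c *: v) v -> derivable (fun t : R => f (x + t *: v)) c 1.
Proof. by rewrite /derivable line_difference_quotient. Qed.

Lemma derive1_line (f : V -> R) (x v : V) :
  derive1 (fun t : R => f (x + t *: v)) = (fun t => 'D_v f (x + t *: v)).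
Proof. by apply: funext => c; rewrite derive1E /derive line_difference_quotient. Qed.

Lemma continuous_line (x v : V) : continuous (fun t : R => x + t *: v).
Proof.
by move=> c; apply: continuousD (@cst_continuous _ _ x c) (@scalel_continuous _ _ v c).
Qed.

End restriction_to_a_line.

Section real_functions.
Variable R : realType.
Implicit Types (g : R -> R) (r dx : R).

Lemma derive1_eq0_at_strict_max g (eps : R) :
  0 < eps -> (forall c, derivable g c 1) ->
  (forall c, 0 < `|c| < eps -> g c < g 0) -> derive1 g 0 = 0.
Proof.
move=> eps_gt0 dg gmax.
have in_ball c : c \in `]- eps, eps[ -> g c <= g 0.
  rewrite in_itv /= => /andP[? ?]; have [->//|c0] := eqVneq c 0.
  by apply/ltW/gmax; rewrite normr_gt0 c0 /= ltr_norml; apply/andP; split.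
have zero_in : 0 \in `]- eps, eps[ by rewrite in_itv /= oppr_lt0 eps_gt0.
rewrite derive1E.
by case: (derive1_at_max (ltW (gtrN eps_gt0)) (fun c _ => dg c) zero_in in_ball).
Qed.

Lemma lt0_near0 (h : R -> R) : {for 0, continuous h} -> h 0 < 0 ->
  exists2 d, 0 < d & forall c, `|c| < d -> h c < 0.
Proof.
move=> ch h0; have /nbhs_ballP[d d0 hd] : \forall t \near 0, h t < 0.
  exact: cvgr_lt ch _ h0.
by exists d => // c cd; apply: hd; rewrite /ball /= sub0r normrN.
Qed.

Lemma monotone_around_stationary g :
  (forall c, derivable g c 1) -> (forall c, derivable (derive1 g) c 1) ->
  {for 0, continuous (derive1 (derive1 g))} -> derive1 (derive1 g) 0 < 0 ->
  derive1 g 0 = 0 ->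
  exists2 r, 0 < r &
    {in `[- r, 0] &, {homo g : x y / x <= y}} /\
    {in `[0, r] &, {homo g : x y /~ x <= y}}.
Proof.
move=> dg dg1 cg2 g2_lt0 g1_0.
have [d d_gt0 g2_neg] := lt0_near0 cg2 g2_lt0.
have r_gt0 : 0 < d / 2 by lra.
exists (d / 2) => //.
have g1_dec : {in `[- (d / 2), d / 2] &, {homo derive1 g : x y /~ x <= y}}.
  apply: ler0_derive1_le_cc => [x _|x|]; first exact: dg1.
    by rewrite in_itv /= => /andP[? ?]; apply/ltW/g2_neg; rewrite ltr_norml; lra.
  by apply: derivable_within_continuous => x _; exact: dg1.
have g1_sign x y : - (d / 2) <= x -> y <= d / 2 -> x <= y ->
    derive1 g y <= derive1 g x.
  by move=> ? ? ?; apply: g1_dec; rewrite ?in_itv /=; try (apply/andP; split); lra.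
split.
- apply: ger0_derive1_le_cc => [x _|x|]; first exact: dg.
    rewrite in_itv /= => /andP[? ?]; rewrite -g1_0.
    by apply: g1_sign; lra.
  by apply: derivable_within_continuous => x _; exact: dg.
- apply: ler0_derive1_le_cc => [x _|x|]; first exact: dg.
    rewrite in_itv /= => /andP[? ?]; rewrite -g1_0.
    by apply: g1_sign; lra.
  by apply: derivable_within_continuous => x _; exact: dg.
Qed.

Lemma discrete_ridge_near_max g r dx (c0 : R) :
  {in `[- r, 0] &, {homo g : x y / x <= y}} ->
  {in `[0, r] &, {homo g : x y /~ x <= y}} ->
  0 < dx -> dx < r / 2 -> - dx < c0 <= 0 ->
  exists2 c, c = c0 \/ c = c0 + dx &
    g (c + dx) <= g c /\ g (c - dx) <= g c.
Proof.
move=> ginc gdec dx_gt0 dx_small /andP[c0_gt c0_le0].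
have [le_c0_c1|lt_c1_c0] := lerP (g c0) (g (c0 + dx)).
- exists (c0 + dx); [by right | split; last by rewrite addrK].
  by apply: gdec; rewrite ?in_itv /=; try (apply/andP; split); lra.
- exists c0; [by left | split; first exact: ltW].
  by apply: ginc; rewrite ?in_itv /=; try (apply/andP; split); lra.
Qed.

End real_functions.

Section grid_geometry.
Variables (R : realType) (n : nat).
Implicit Types (dx : R) (p q x : 'rV[R]_n) (i : 'I_n).

Lemma enorm_scale_coord_vec (c : R) i : enorm (c *: coord_vec R i) = `|c|.
Proof.
rewrite /enorm (bigD1 i) //= big1 ?addr0; first by rewrite !mxE eqxx mulr1 sqrtr_sqr.
by move=> j ji; rewrite !mxE eq_sym (negbTE ji) mulr0 expr2 mulr0.
Qed.

Lemma on_grid_shift dx p x i (z : int) :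
  on_grid dx p x -> on_grid dx p (x + (z%:~R * dx) *: coord_vec R i).
Proof.
move=> x_grid k; have [w xk] := x_grid k.
exists (w + z * (i == k)%:R); rewrite !mxE xk -addrA intrD mulrDl intrM.
by case: (i == k); rewrite ?mulr1 ?mulr0 ?mul0r.
Qed.

(* Writing [x = g0 + T e_i] with [g0] a grid point, [c0] is [dx floor (T / dx) - T]. *)
Lemma grid_points_on_grid_line dx p q i x :
  0 < dx -> is_grid_line dx p q i -> on_line q i x ->
  exists2 c0, - dx < c0 <= 0 &
    forall z : int, on_grid dx p (x + (c0 + z%:~R * dx) *: coord_vec R i).
Proof.
move=> dx_gt0 [g0 [k [g0_grid line_eq]]] [t ->].
have [s g0E] : on_line q i g0 by apply/line_eq; exists 0; rewrite scale0r addr0.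
pose T := t - s; pose m := Num.floor (T / dx).
have m_le : m%:~R * dx <= T by rewrite -ler_pdivlMr // floor_le.
have m_gt : T < (m + 1)%:~R * dx by rewrite -ltr_pdivrMr // floorD1_gt.
rewrite intrD mulrDl mul1r in m_gt.
exists (m%:~R * dx - T); first by apply/andP; split; lra.
move=> z; have -> : q + t *: coord_vec R i = g0 + T *: coord_vec R i.
  by rewrite g0E -addrA -scalerDl /T subrKC.
rewrite -addrA -scalerDl.
have -> : T + (m%:~R * dx - T + z%:~R * dx) = (m + z)%:~R * dx.
  by rewrite intrD mulrDl; lra.
exact: on_grid_shift.
Qed.

End grid_geometry.

Theorem theorem1 (R : realType) (n : nat) (F : 'rV[R]_n -> R) (i : 'I_n)
  (q xs : 'rV[R]_n) :
  C2 F ->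
  on_line q i xs ->
  (exists2 eps1 : R, 0 < eps1 &
     forall c : R, 0 < `|c| < eps1 -> F (xs + c *: coord_vec R i) < F xs) ->
  'D_(coord_vec R i) ('D_(coord_vec R i) F) xs < 0 ->
  exists2 eps : R, 0 < eps &
    forall (dx : R) (p : 'rV[R]_n), 0 < dx -> dx < eps ->
      is_grid_line dx p q i ->
      exists xg : 'rV[R]_n,
        [/\ on_grid dx p xg, grid_ridge F dx xg & enorm (xs - xg) <= dx].
Proof.
move=> [dF [ddF cdF]] xs_line [eps1 eps1_gt0 xs_max] D2_neg.
set e := coord_vec R i; pose g c := F (xs + c *: e).
have dg c : derivable g c 1 := derivable_line (dF i _).
have g1E : derive1 g = fun c => 'D_e F (xs + c *: e) := derive1_line _ _ _.
have g2E : derive1 (derive1 g) = fun c => 'D_e ('D_e F) (xs + c *: e).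
  by rewrite g1E; exact: derive1_line.
have dg1 c : derivable (derive1 g) c 1.
  by rewrite g1E; exact: derivable_line (ddF i i _).
have cg2 : {for 0, continuous (derive1 (derive1 g))}.
  by rewrite g2E; exact: continuous_comp (@continuous_line _ _ xs e 0) (cdF i i _).
have g2_lt0 : derive1 (derive1 g) 0 < 0 by rewrite g2E /= scale0r addr0.
have g1_0 : derive1 g 0 = 0.
  apply: (derive1_eq0_at_strict_max eps1_gt0 dg) => c.
  by rewrite /g scale0r addr0; exact: xs_max.
have [r r_gt0 [ginc gdec]] := monotone_around_stationary dg dg1 cg2 g2_lt0 g1_0.
exists (r / 2) => [|dx p dx_gt0 dx_small grid_line]; first lra.
have [c0 c0_bounds c0_grid] := grid_points_on_grid_line dx_gt0 grid_line xs_line.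
have [c c_grid [ridge_up ridge_down]] :=
  discrete_ridge_near_max ginc gdec dx_gt0 dx_small c0_bounds.
exists (xs + c *: e); split.
- by case: c_grid => ->; [move: (c0_grid 0) | move: (c0_grid 1)];
    rewrite ?mul0r ?addr0 ?mul1r.
- exists i; split; [move: ridge_up | move: ridge_down];
    by rewrite /g ?scalerBl ?scalerDl addrA => ridge; exact: ridge.
- rewrite opprD addrA subrr add0r -scaleNr enorm_scale_coord_vec normrN.
  by move: c0_bounds => /andP[? ?]; case: c_grid => ->; rewrite ler_norml; lra.
Qed.
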